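(* For the empty configuration (no points, lines or curves) there exists an admissible set $\Sigma\subset\mathbb R^2$ such that no two lines, each passing through two distinct points of $\Sigma$, are perpendicular. In particular, a pair of perpendicular lines cannot be constructed using only a straightedge.
   Context: A configuration is a finite collection of points $a_i\in\mathbb R^2$, lines $\ell_i\subset\mathbb R^2$ and curves $\gamma_i\subset\mathbb R^2$. Given a configuration $\{a_i,\ell_i,\gamma_i\}$, call a set $\Sigma\subset\mathbb R^2$ admissible if: (1) $\Sigma$ is dense in $\mathbb R^2$; (2) every $a_i$ lies in $\Sigma$; (3) for any $b_1,b_2,b_3,b_4\in\Sigma$ with $b_1\neq b_2$, $b_3\ne b_4$, if the lines $b_1b_2$ and $b_3b_4$ are distinct and not parallel, then their intersection point lies in $\Sigma$; (4) for any distinct $b_1,b_2\in\Sigma$, every isolated intersection point of the line $b_1b_2$ with any of the lines $\ell_i$ or curves $\gamma_j$ lies in $\Sigma$. For the empty configuration, conditions (2) and (4) are vacuous. *)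

From Stdlib Require Import Reals.
Open Scope R_scope.

Definition point := (R * R)%type.

Definition on_line (b1 b2 x : point) : Prop :=
  (fst x - fst b1) * (snd b2 - snd b1) - (snd x - snd b1) * (fst b2 - fst b1) = 0.

Definition same_line (b1 b2 b3 b4 : point) : Prop :=
  forall x, on_line b1 b2 x <-> on_line b3 b4 x.

Definition parallel (b1 b2 b3 b4 : point) : Prop :=
  (fst b2 - fst b1) * (snd b4 - snd b3) - (snd b2 - snd b1) * (fst b4 - fst b3) = 0.

Definition perpendicular (b1 b2 b3 b4 : point) : Prop :=
  (fst b2 - fst b1) * (fst b4 - fst b3) + (snd b2 - snd b1) * (snd b4 - snd b3) = 0.

Definition dense (S : point -> Prop) : Prop :=
  forall (p : point) (eps : R), 0 < eps ->
    exists q, S q /\ (fst q - fst p) ^ 2 + (snd q - snd p) ^ 2 < eps ^ 2.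

(* admissible set for the empty configuration: conditions (1) and (3);
   (2) and (4) are vacuous. *)
Definition admissible_empty (S : point -> Prop) : Prop :=
  dense S /\
  (forall b1 b2 b3 b4 : point,
     S b1 -> S b2 -> S b3 -> S b4 -> b1 <> b2 -> b3 <> b4 ->
     ~ same_line b1 b2 b3 b4 -> ~ parallel b1 b2 b3 b4 ->
     forall x, on_line b1 b2 x -> on_line b3 b4 x -> S x).

(* The set is the image of Q^2 under the shear (x, y) |-> (x + sqrt 2 y, y).
   Shears map lines to lines and preserve parallelism, and two non-parallel
   rational lines meet in a rational point (Cramer's rule), so the set is
   closed under intersections of lines; it is dense because Q^2 is.  A
   sheared difference vector is u = (u1 + sqrt 2 u2, u2) with u1, u2
   rational, and the dot product of two of them is
   (u1 v1 + 3 u2 v2) + sqrt 2 (u1 v2 + u2 v1).  Since sqrt 2 is irrational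
   both brackets vanish, and eliminating v from this linear system gives
   u1^2 = 3 u2^2, which has no nonzero rational solution. *)
From Stdlib Require Import Reals QArith Qreals Znumtheory Wf_nat Lia Lra Psatz.
Open Scope R_scope.

Lemma prime_sq_eq_mul_sq (p n d : Z) :
  prime p -> (n * n = p * (d * d))%Z -> d = 0%Z.
Proof.
  intros Hp. pose proof (prime_ge_2 p Hp) as Hp2.
  remember (Z.abs_nat d) as m eqn:Hm.
  revert n d Hm. induction m as [m IH] using lt_wf_ind. intros n d Hm Heq.
  destruct (Z.eq_dec d 0) as [|Hd0]; [assumption|].
  assert (Hpn : (p | n)) by
    (destruct (prime_mult p Hp n n) as [H|H]; auto; exists (d * d)%Z; lia).
  destruct Hpn as [k ->].
  assert (Hkd : (p * (k * k) = d * d)%Z) by (apply (Z.mul_cancel_l _ _ p); lia).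
  assert (Hpd : (p | d)) by
    (destruct (prime_mult p Hp d d) as [H|H]; auto; exists (k * k)%Z; lia).
  destruct Hpd as [e ->].
  assert (Hke : (k * k = p * (e * e))%Z) by (apply (Z.mul_cancel_l _ _ p); lia).
  assert (e = 0%Z) as -> by (apply (IH (Z.abs_nat e)) with (n := k); auto; nia).
  lia.
Qed.

Definition rational (r : R) : Prop := exists q : Q, r = Q2R q.

Lemma rational_IZR (z : Z) : rational (IZR z).
Proof. exists (inject_Z z). unfold Q2R; simpl. field. Qed.

Lemma rational_add a b : rational a -> rational b -> rational (a + b).
Proof. intros [x ->] [y ->]. exists (x + y)%Q. now rewrite Q2R_plus. Qed.

Lemma rational_sub a b : rational a -> rational b -> rational (a - b).
Proof. intros [x ->] [y ->]. exists (x - y)%Q. now rewrite Q2R_minus. Qed.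

Lemma rational_mul a b : rational a -> rational b -> rational (a * b).
Proof. intros [x ->] [y ->]. exists (x * y)%Q. now rewrite Q2R_mult. Qed.

Lemma rational_opp a : rational a -> rational (- a).
Proof. intros [x ->]. exists (- x)%Q. now rewrite Q2R_opp. Qed.

Lemma rational_div a b : rational a -> rational b -> b <> 0 -> rational (a / b).
Proof.
  intros [x ->] [y ->] Hy. exists (x / y)%Q. rewrite Q2R_div; auto.
  intro E. apply Hy. rewrite (Qeq_eqR _ _ E). unfold Q2R; simpl. field.
Qed.

Ltac rational_closure :=
  repeat (assumption || apply rational_IZR || apply rational_add
          || apply rational_sub || apply rational_mul || apply rational_opp).

Lemma rational_sq_neq_prime (p : Z) (r : R) :
  prime p -> rational r -> r * r <> IZR p.
Proof.
  intros Hp [[n d] ->] H. unfold Q2R in H; simpl in H.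
  assert (Hd : IZR (Z.pos d) <> 0) by (apply not_0_IZR; lia).
  assert (H' : IZR (n * n) = IZR (p * (Z.pos d * Z.pos d))).
  { rewrite !mult_IZR, <- H. field. exact Hd. }
  apply eq_IZR, prime_sq_eq_mul_sq in H'; [lia | exact Hp].
Qed.

Lemma rational_approx (r d : R) : 0 < d -> exists q : Q, Rabs (Q2R q - r) < d.
Proof.
  intros Hd.
  destruct (archimed (/ d)) as [Hn _]. set (n := up (/ d)) in *.
  assert (Hinv : 0 < / d) by (apply Rinv_0_lt_compat; lra).
  assert (Hn0 : (0 < n)%Z) by (apply lt_IZR; lra).
  destruct (archimed (r * IZR n)) as [Hm1 Hm2]. set (m := up (r * IZR n)) in *.
  exists (Qmake m (Z.to_pos n)). unfold Q2R; simpl. rewrite Z2Pos.id by lia.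
  assert (HnR : 0 < IZR n) by lra.
  replace (IZR m * / IZR n - r) with ((IZR m - r * IZR n) / IZR n) by (field; lra).
  rewrite Rabs_right.
  - apply (Rmult_lt_reg_r (IZR n)); [exact HnR|].
    replace ((IZR m - r * IZR n) / IZR n * IZR n) with (IZR m - r * IZR n)
      by (field; lra).
    apply (Rmult_lt_compat_l d) in Hn; [|exact Hd].
    rewrite Rinv_r in Hn by lra. lra.
  - apply Rle_ge, Rmult_le_pos; [lra | left; apply Rinv_0_lt_compat; lra].
Qed.

Definition rational_point (z : point) : Prop := rational (fst z) /\ rational (snd z).

Lemma rational_point_intersection (a1 a2 a3 a4 x : point) :
  rational_point a1 -> rational_point a2 -> rational_point a3 -> rational_point a4 ->
  ~ parallel a1 a2 a3 a4 -> on_line a1 a2 x -> on_line a3 a4 x ->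
  rational_point x.
Proof.
  destruct a1 as [p1 q1], a2 as [p2 q2], a3 as [p3 q3], a4 as [p4 q4], x as [x y].
  unfold rational_point, parallel, on_line; simpl.
  intros [] [] [] [] Hpar Hx1 Hx2.
  set (D := (p2 - p1) * (q4 - q3) - (q2 - q1) * (p4 - p3)) in *.
  set (c1 := p1 * (q2 - q1) - q1 * (p2 - p1)).
  set (c2 := p3 * (q4 - q3) - q3 * (p4 - p3)).
  (* Cramer's rule: both numerators are combinations of the two line equations. *)
  assert (Ex : x * D - (c2 * (p2 - p1) - c1 * (p4 - p3)) =
    (p2 - p1) * ((x - p3) * (q4 - q3) - (y - q3) * (p4 - p3))
    - (p4 - p3) * ((x - p1) * (q2 - q1) - (y - q1) * (p2 - p1)))
    by (unfold D, c1, c2; ring).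
  assert (Ey : y * D - (c2 * (q2 - q1) - c1 * (q4 - q3)) =
    (q2 - q1) * ((x - p3) * (q4 - q3) - (y - q3) * (p4 - p3))
    - (q4 - q3) * ((x - p1) * (q2 - q1) - (y - q1) * (p2 - p1)))
    by (unfold D, c1, c2; ring).
  rewrite Hx1, Hx2 in Ex, Ey.
  assert (Hx : x = (c2 * (p2 - p1) - c1 * (p4 - p3)) / D)
    by (field_simplify_eq; [lra | exact Hpar]).
  assert (Hy : y = (c2 * (q2 - q1) - c1 * (q4 - q3)) / D)
    by (field_simplify_eq; [lra | exact Hpar]).
  rewrite Hx, Hy. unfold c1, c2, D.
  split; apply rational_div; auto; rational_closure.
Qed.

Definition shear (t : R) (z : point) : point := (fst z + t * snd z, snd z).

Lemma shearK (t : R) (z : point) : shear t (shear (- t) z) = z.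
Proof. destruct z as [x y]. unfold shear; simpl. f_equal. ring. Qed.

Lemma on_line_shear (t : R) (a1 a2 x : point) :
  on_line (shear t a1) (shear t a2) (shear t x) <-> on_line a1 a2 x.
Proof.
  unfold on_line, shear; simpl.
  match goal with |- ?l = 0 <-> ?r = 0 => replace l with r by ring end.
  reflexivity.
Qed.

Lemma parallel_shear (t : R) (a1 a2 a3 a4 : point) :
  parallel (shear t a1) (shear t a2) (shear t a3) (shear t a4) <-> parallel a1 a2 a3 a4.
Proof.
  unfold parallel, shear; simpl.
  match goal with |- ?l = 0 <-> ?r = 0 => replace l with r by ring end.
  reflexivity.
Qed.

Definition sheared_rationals (t : R) (z : point) : Prop :=
  exists a, rational_point a /\ z = shear t a.

Lemma sheared_rationals_dense (t : R) : dense (sheared_rationals t).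
Proof.
  intros [p1 p2] eps Heps.
  assert (Heps2 : 0 < eps / 2) by lra.
  destruct (rational_approx p2 _ Heps2) as [y Hy].
  destruct (rational_approx (p1 - t * Q2R y) _ Heps2) as [x Hx].
  exists (shear t (Q2R x, Q2R y)). split.
  - exists (Q2R x, Q2R y). split; [split; eexists; reflexivity | reflexivity].
  - unfold shear; simpl. apply Rabs_def2 in Hx, Hy. nra.
Qed.

Lemma sheared_rationals_intersection_closed (t : R) (b1 b2 b3 b4 x : point) :
  sheared_rationals t b1 -> sheared_rationals t b2 ->
  sheared_rationals t b3 -> sheared_rationals t b4 ->
  ~ parallel b1 b2 b3 b4 -> on_line b1 b2 x -> on_line b3 b4 x ->
  sheared_rationals t x.
Proof.
  intros [a1 [Ha1 ->]] [a2 [Ha2 ->]] [a3 [Ha3 ->]] [a4 [Ha4 ->]] Hpar Hx1 Hx2.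
  exists (shear (- t) x). split; [|symmetry; apply shearK].
  rewrite <- (shearK t x), on_line_shear in Hx1, Hx2.
  rewrite parallel_shear in Hpar.
  exact (rational_point_intersection a1 a2 a3 a4 _ Ha1 Ha2 Ha3 Ha4 Hpar Hx1 Hx2).
Qed.

Lemma sheared_rationals_admissible (t : R) : admissible_empty (sheared_rationals t).
Proof.
  split; [apply sheared_rationals_dense|].
  intros b1 b2 b3 b4 H1 H2 H3 H4 _ _ _ Hpar x Hx1 Hx2.
  exact (sheared_rationals_intersection_closed t b1 b2 b3 b4 x H1 H2 H3 H4 Hpar Hx1 Hx2).
Qed.

Lemma rational_add_sqrt2_mul_eq0 (a b : R) :
  rational a -> rational b -> a + sqrt 2 * b = 0 -> a = 0 /\ b = 0.
Proof.
  intros Ha Hb H.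
  destruct (Req_dec b 0) as [->|Hb0]; [lra|].
  exfalso. apply (rational_sq_neq_prime 2 (sqrt 2) prime_2).
  - replace (sqrt 2) with (- a / b) by (field_simplify_eq; lra).
    apply rational_div; rational_closure.
  - apply sqrt_sqrt. lra.
Qed.

Lemma rational_sq_eq_3sq (u1 u2 : R) :
  rational u1 -> rational u2 -> u1 * u1 = 3 * (u2 * u2) -> u2 = 0.
Proof.
  intros Hu1 Hu2 H. destruct (Req_dec u2 0) as [|Hu20]; [assumption|].
  exfalso. apply (rational_sq_neq_prime 3 (u1 / u2) prime_3).
  - apply rational_div; assumption.
  - simpl. field_simplify_eq; [lra | exact Hu20].
Qed.

(* The left-hand side is the dot product of the sheared rational vectors
   (u1 + sqrt 2 u2, u2) and (v1 + sqrt 2 v2, v2). *)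
Lemma sheared_sqrt2_dot_neq0 (u1 u2 v1 v2 : R) :
  rational u1 -> rational u2 -> rational v1 -> rational v2 ->
  (u1, u2) <> (0, 0) -> (v1, v2) <> (0, 0) ->
  (u1 + sqrt 2 * u2) * (v1 + sqrt 2 * v2) + u2 * v2 <> 0.
Proof.
  intros Hu1 Hu2 Hv1 Hv2 Hu Hv H.
  pose proof (sqrt_sqrt 2 ltac:(lra)) as Hs.
  assert (Hsplit : (u1 + sqrt 2 * u2) * (v1 + sqrt 2 * v2) + u2 * v2 =
    (u1 * v1 + 3 * (u2 * v2)) + sqrt 2 * (u1 * v2 + u2 * v1)
    + (sqrt 2 * sqrt 2 - 2) * (u2 * v2)) by ring.
  rewrite Hs, H in Hsplit.
  assert (E : u1 * v1 + 3 * (u2 * v2) = 0 /\ u1 * v2 + u2 * v1 = 0)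
    by (apply rational_add_sqrt2_mul_eq0; [rational_closure .. | lra]).
  destruct E as [E1 E2].
  assert (Hdet : v2 * (u1 * u1 - 3 * (u2 * u2)) = 0).
  { replace (v2 * (u1 * u1 - 3 * (u2 * u2))) with
      (u1 * (u1 * v2 + u2 * v1) - u2 * (u1 * v1 + 3 * (u2 * v2))) by ring.
    rewrite E1, E2. ring. }
  destruct (Rmult_integral _ _ Hdet) as [Hv20 | Hu0].
  - subst v2. destruct (Req_dec u1 0) as [-> | Hu10].
    + assert (u2 <> 0) by (intros ->; apply Hu; reflexivity).
      apply Hv. f_equal. apply (Rmult_eq_reg_l u2); lra.
    + apply Hv. f_equal. apply (Rmult_eq_reg_l u1); lra.
  - pose proof (rational_sq_eq_3sq u1 u2 Hu1 Hu2 ltac:(lra)) as Hu20.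
    subst u2. apply Hu. f_equal. nra.
Qed.

Theorem mainTheorem7 :
  exists S : point -> Prop,
    admissible_empty S /\
    (forall b1 b2 b3 b4 : point,
       S b1 -> S b2 -> S b3 -> S b4 -> b1 <> b2 -> b3 <> b4 ->
       ~ perpendicular b1 b2 b3 b4).
Proof.
  exists (sheared_rationals (sqrt 2)). split; [apply sheared_rationals_admissible|].
  intros b1 b2 b3 b4 [[x1 y1] [[Hx1 Hy1] ->]] [[x2 y2] [[Hx2 Hy2] ->]]
    [[x3 y3] [[Hx3 Hy3] ->]] [[x4 y4] [[Hx4 Hy4] ->]] N12 N34 Hperp.
  unfold perpendicular, shear in *; simpl in *.
  apply (sheared_sqrt2_dot_neq0 (x2 - x1) (y2 - y1) (x4 - x3) (y4 - y3));
    rational_closure.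
  - intros E. injection E as E1 E2. apply N12.
    replace x2 with x1 by lra. replace y2 with y1 by lra. reflexivity.
  - intros E. injection E as E1 E2. apply N34.
    replace x4 with x3 by lra. replace y4 with y3 by lra. reflexivity.
  - rewrite <- Hperp. ring.
Qed.
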